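(* Let $\nu\in\left(-1,-\tfrac12\right)$. Then there exists $z_\nu\ge j_{\nu,1}$ such that $x\mapsto\mathcal{I}_\nu(x)$ is strictly log-convex on $(0,z_\nu)$ and strictly log-concave on $(z_\nu,\infty)$. In particular, $\mathcal{I}_\nu$ is not log-convex on all of $\mathbb{R}$ for such $\nu$.
   Context: For $\nu>-1$ define $\mathcal{I}_\nu:\mathbb{R}\to[1,\infty)$ by $\mathcal{I}_\nu(x)=\sum_{n\ge0}\frac{(1/4)^n}{(\nu+1)_n\, n!}x^{2n}$, where $(a)_n=a(a+1)\cdots(a+n-1)$, $(a)_0=1$; equivalently $\mathcal{I}_\nu(x)=2^\nu\Gamma(\nu+1)x^{-\nu}I_\nu(x)$ for $x>0$, with $I_\nu$ the modified Bessel function of the first kind. $j_{\nu,1}$ is the first positive zero of the Bessel function of the first kind $J_\nu$. *)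

From Stdlib Require Import Arith Factorial Reals Lra ClassicalEpsilon.
Open Scope R_scope.

Fixpoint poch (a : R) (n : nat) : R :=
  match n with
  | O => 1
  | S k => poch a k * (a + INR k)
  end.

Definition Iterm (nu x : R) (n : nat) : R :=
  (/ 4) ^ n / (poch (nu + 1) n * INR (fact n)) * x ^ (2 * n).

(* \mathcal{I}_nu(x) = sum_{n>=0} (1/4)^n / ((nu+1)_n n!) x^{2n}
   (the series converges for every real x when nu > -1). *)
Definition calI (nu x : R) : R :=
  epsilon (inhabits 0) (fun l => infinite_sum (Iterm nu x) l).

(* Normalized Bessel function of the first kind:
   calJ nu x = sum_{n>=0} (-1/4)^n / ((nu+1)_n n!) x^{2n},
   so that J_nu(x) = (x/2)^nu / Gamma(nu+1) * calJ nu x for x > 0. *)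
Definition Jterm (nu x : R) (n : nat) : R :=
  (- / 4) ^ n / (poch (nu + 1) n * INR (fact n)) * x ^ (2 * n).

Definition calJ (nu x : R) : R :=
  epsilon (inhabits 0) (fun l => infinite_sum (Jterm nu x) l).

(* j is the first positive zero of J_nu (equivalently of calJ nu, since
   (x/2)^nu / Gamma(nu+1) is nonzero for x > 0, nu > -1). *)
Definition is_first_pos_zero_J (nu j : R) : Prop :=
  0 < j /\ calJ nu j = 0 /\ (forall x, 0 < x < j -> calJ nu x <> 0).

Definition strictly_convex_on (f : R -> R) (a b : R) : Prop :=
  forall x y t, a < x < b -> a < y < b -> x <> y -> 0 < t < 1 ->
    f (t * x + (1 - t) * y) < t * f x + (1 - t) * f y.

Definition strictly_concave_on (f : R -> R) (a b : R) : Prop :=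
  strictly_convex_on (fun x => - f x) a b.

Definition strictly_convex_from (f : R -> R) (a : R) : Prop :=
  forall x y t, a < x -> a < y -> x <> y -> 0 < t < 1 ->
    f (t * x + (1 - t) * y) < t * f x + (1 - t) * f y.

Definition strictly_concave_from (f : R -> R) (a : R) : Prop :=
  strictly_convex_from (fun x => - f x) a.

Definition log_convex_on_R (f : R -> R) : Prop :=
  forall x y t, 0 <= t <= 1 ->
    ln (f (t * x + (1 - t) * y)) <= t * ln (f x) + (1 - t) * ln (f y).

From Pilot Require Import Defs.
From Stdlib Require Import Reals Factorial Lra Lia ClassicalEpsilon Classical.
From Coquelicot Require Import Coquelicot.
Open Scope R_scope.

(* The series of Defs are values of one entire power series A(s) = sum a_n s^n:
   calI nu x = A(x^2) and calJ nu x = A(-x^2), and A solves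
   4 s A'' + 4 (nu+1) A' = A.  Hence V(x) = x A'(x^2)/A(x^2), which is half the
   derivative of ln (calI nu), is positive on (0,+oo) and solves the Riccati
   equation V' = 1/2 + b V/x - 2 V^2 with b = -(2 nu + 1) > 0.

   Next it develops the Bessel
   series, and evaluates it at the test point x0 = sqrt (4 (nu+1)(nu+2)),
   where explicit truncation bounds give V'(x0) > 0 and calJ nu x0 < 0.  The
   sign change z > x0 of V' separates convexity from concavity of
   ln (calI nu), and the first zero j of J_nu lies before x0. *)

Lemma Series_nonneg (u : nat -> R) :
  (forall n, 0 <= u n) -> ex_series u -> 0 <= Series u.
Proof.
  intros Hu Hex.
  assert (H0 : Series (fun _ => 0) = 0).
  { rewrite (Series_ext _ (fun n => 0 * u n)) by (intros; ring).
    rewrite Series_scal_l; ring. }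
  rewrite <- H0. apply Series_le; auto. intros n; split; [lra | auto].
Qed.

Lemma Series_halving_bound (u : nat -> R) :
  (forall n, 0 <= u n) -> (forall n, u (S n) <= u n / 2) -> ex_series u ->
  Series u <= 2 * u 0%nat.
Proof.
  intros Hpos Hhalf Hex.
  assert (Hgeom : forall n, u n <= u 0%nat * (/ 2) ^ n).
  { induction n as [|n IH]; simpl; [lra|]. specialize (Hhalf n). lra. }
  assert (Hq : Rabs (/ 2) < 1) by (rewrite Rabs_pos_eq; lra).
  apply Rle_trans with (Series (fun n => u 0%nat * (/ 2) ^ n)).
  - apply Series_le; [intros n; split; auto|].
    apply (@ex_series_scal_l R_AbsRing R_CompleteNormedModule), ex_series_geom, Hq.
  - rewrite Series_scal_l, Series_geom by exact Hq. lra.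
Qed.

Lemma continuity_pos_nbhd (f : R -> R) x : continuity_pt f x -> 0 < f x ->
  exists d, 0 < d /\ forall y, Rabs (y - x) < d -> 0 < f y.
Proof.
  intros Hc Hpos. destruct (Hc (f x) Hpos) as [d [Hd Hnear]].
  exists d; split; auto. intros y Hyx.
  destruct (Req_dec x y) as [<-|Hne]; auto.
  assert (Hl := Hnear y (conj (conj I Hne) Hyx)). simpl in Hl. unfold R_dist in Hl.
  apply Rabs_def2 in Hl. lra.
Qed.

(* The point m is the
   supremum of the points up to which f stays positive. *)
Lemma first_zero (f : R -> R) a b : a < b ->
  (forall x, a <= x <= b -> continuity_pt f x) -> 0 < f a -> f b <= 0 ->
  exists m, a < m <= b /\ f m = 0 /\ (forall w, a <= w < m -> 0 < f w).
Proof.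
  intros Hab Hc Ha Hb.
  set (E := fun y => a <= y <= b /\ forall w, a <= w <= y -> 0 < f w).
  assert (HE : bound E) by (exists b; intros y [Hy _]; lra).
  assert (Ea : E a) by (split; [lra | intros w Hw; replace w with a by lra; auto]).
  destruct (completeness E HE (ex_intro _ a Ea)) as [m [Hub Hlub]].
  assert (Ham : a <= m) by (apply Hub; auto).
  assert (Hmb : m <= b) by (apply Hlub; intros y [Hy _]; lra).
  assert (Hbelow : forall w, a <= w < m -> 0 < f w).
  { intros w Hw. destruct (classic (exists y, E y /\ w < y)) as [[y [[_ Hy] Hwy]]|Hn].
    - apply Hy; lra.
    - exfalso. assert (m <= w); [|lra]. apply Hlub. intros y Ey.
      destruct (Rle_lt_dec y w); auto. exfalso; apply Hn; eauto. }
  assert (Hcm := Hc m (conj Ham Hmb)).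
  assert (Hm0 : f m = 0).
  { destruct (Rtotal_order (f m) 0) as [Hneg|[Hz|Hpos]]; auto; exfalso.
    - (* f < 0 near m, contradicting positivity just below m *)
      destruct (continuity_pos_nbhd (fun t => - f t) m) as [d [Hd Hnear]];
        [apply continuity_pt_opp, Hcm | lra |].
      assert (a < m) by (destruct (Req_dec a m) as [<-|]; lra).
      set (w := Rmax a (m - d / 2)).
      assert (Hw : a <= w < m) by (unfold w; split; [apply Rmax_l | apply Rmax_lub_lt; lra]).
      assert (- f w > 0).
      { apply Hnear. apply Rabs_def1; [lra|]. pose proof (Rmax_r a (m - d / 2)). unfold w in *; lra. }
      specialize (Hbelow w Hw). lra.
    - (* f > 0 near m, so f stays positive somewhat beyond m *)
      destruct (continuity_pos_nbhd f m Hcm Hpos) as [d [Hd Hnear]].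
      assert (m < b) by (destruct (Req_dec m b) as [->|]; lra).
      set (y := Rmin b (m + d / 2)).
      assert (Hy : m < y <= b) by (unfold y; split; [apply Rmin_glb_lt; lra | apply Rmin_l]).
      assert (Ey : E y).
      { split; [lra|]. intros w Hw.
        destruct (Rlt_le_dec w m); [apply Hbelow; lra|].
        apply Hnear. pose proof (Rmin_r b (m + d / 2)). apply Rabs_def1; unfold y in *; lra. }
      specialize (Hub y Ey). lra. }
  exists m. repeat split; auto.
  destruct (Req_dec a m) as [<-|]; lra.
Qed.

Definition is_interval (P : R -> Prop) : Prop :=
  forall x y c, P x -> P y -> x <= c <= y -> P c.

Lemma strictly_increasing_of_deriv (g g' : R -> R) (P : R -> Prop) :
  is_interval P ->
  (forall x, P x -> derivable_pt_lim g x (g' x)) ->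
  (forall x, P x -> 0 < g' x) ->
  forall x y, P x -> P y -> x < y -> g x < g y.
Proof.
  intros HP Hd Hpos x y Px Py Hxy.
  destruct (MVT_cor2 g g' x y Hxy) as [c [Heq Hc]].
  - intros c Hc. apply Hd, (HP x y); auto.
  - assert (0 < g' c) by (apply Hpos, (HP x y); auto; lra).
    assert (0 < g' c * (y - x)) by (apply Rmult_lt_0_compat; lra). lra.
Qed.

Lemma increasing_of_deriv (g g' : R -> R) (P : R -> Prop) :
  is_interval P ->
  (forall x, P x -> derivable_pt_lim g x (g' x)) ->
  (forall x, P x -> 0 <= g' x) ->
  forall x y, P x -> P y -> x <= y -> g x <= g y.
Proof.
  intros HP Hd Hnn x y Px Py Hxy.
  destruct (Req_dec x y) as [<-|Hne]; [lra|].
  destruct (MVT_cor2 g g' x y) as [c [Heq Hc]]; [lra| |].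
  - intros c Hc. apply Hd, (HP x y); auto.
  - assert (0 <= g' c) by (apply Hnn, (HP x y); auto; lra).
    assert (0 <= g' c * (y - x)) by (apply Rmult_le_pos; lra). lra.
Qed.

(* A function whose derivative is strictly increasing on an interval is
   strictly convex there: by the mean value theorem on [x,p] and [p,y], the
   chord slope on the right exceeds the one on the left. *)
Lemma strictly_convex_of_deriv (f f' : R -> R) (P : R -> Prop) :
  is_interval P ->
  (forall x, P x -> derivable_pt_lim f x (f' x)) ->
  (forall x y, P x -> P y -> x < y -> f' x < f' y) ->
  forall x y t, P x -> P y -> x <> y -> 0 < t < 1 ->
    f (t * x + (1 - t) * y) < t * f x + (1 - t) * f y.
Proof.
  intros HP Hd Hincr.
  assert (Hordered : forall x y t, P x -> P y -> x < y -> 0 < t < 1 ->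
    f (t * x + (1 - t) * y) < t * f x + (1 - t) * f y).
  { intros x y t Px Py Hxy Ht.
    set (p := t * x + (1 - t) * y).
    assert (Hp : x < p < y) by (unfold p; split; nra).
    destruct (MVT_cor2 f f' x p) as [c1 [E1 H1]]; [lra| |].
    { intros c Hc. apply Hd, (HP x y); auto; lra. }
    destruct (MVT_cor2 f f' p y) as [c2 [E2 H2]]; [lra| |].
    { intros c Hc. apply Hd, (HP x y); auto; lra. }
    assert (f' c1 < f' c2) by (apply Hincr; try apply (HP x y); auto; lra).
    assert (Hgap : t * f x + (1 - t) * f y - f p = t * (1 - t) * (y - x) * (f' c2 - f' c1)).
    { replace (f y) with (f p + f' c2 * (y - p)) by lra.
      replace (f x) with (f p - f' c1 * (p - x)) by lra.
      unfold p; ring. }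
    assert (0 < t * (1 - t) * (y - x)) by (apply Rmult_lt_0_compat; nra).
    assert (0 < t * (1 - t) * (y - x) * (f' c2 - f' c1)) by (apply Rmult_lt_0_compat; lra).
    lra. }
  intros x y t Px Py Hne Ht.
  destruct (Rlt_le_dec x y) as [Hxy|Hyx]; [apply Hordered; auto|].
  replace (t * x + (1 - t) * y) with ((1 - t) * y + (1 - (1 - t)) * x) by ring.
  replace (t * f x + (1 - t) * f y) with ((1 - t) * f y + (1 - (1 - t)) * f x) by ring.
  apply Hordered; auto; lra.
Qed.

Lemma deriv_neg_local (f : R -> R) m l : derivable_pt_lim f m l -> l < 0 ->
  exists d, 0 < d /\ (forall y, m - d < y < m -> f m < f y) /\
                     (forall y, m < y < m + d -> f y < f m).
Proof.
  intros Hd Hl. destruct (Hd (- l)) as [[d Hdp] Hquot]; [lra|].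
  assert (Hslope : forall y, y <> m -> Rabs (y - m) < d -> (f y - f m) / (y - m) < 0).
  { intros y Hym Hy. specialize (Hquot (y - m)). simpl in Hquot.
    replace (m + (y - m)) with y in Hquot by ring.
    assert (Hq : Rabs ((f y - f m) / (y - m) - l) < - l) by (apply Hquot; lra).
    apply Rabs_def2 in Hq. lra. }
  exists d; split; auto. split.
  - intros y Hy. assert (Hs := Hslope y ltac:(lra) ltac:(rewrite Rabs_left; lra)).
    replace ((f y - f m) / (y - m)) with ((f m - f y) / (m - y)) in Hs by (field; lra).
    destruct (Rle_lt_dec (f y) (f m)) as [Hle|]; auto. exfalso.
    assert (0 <= (f m - f y) / (m - y)); [|lra].
    apply Rmult_le_pos; [lra|]. left; apply Rinv_0_lt_compat; lra.
  - intros y Hy. assert (Hs := Hslope y ltac:(lra) ltac:(rewrite Rabs_right; lra)).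
    destruct (Rle_lt_dec (f m) (f y)) as [Hle|]; auto. exfalso.
    assert (0 <= (f y - f m) / (y - m)); [|lra].
    apply Rmult_le_pos; [lra|]. left; apply Rinv_0_lt_compat; lra.
Qed.

Section DownwardCrossing.

Variables Q Q' : R -> R.
Hypothesis Q_deriv : forall x, 0 < x -> derivable_pt_lim Q x (Q' x).
Hypothesis Q'_neg_at_zero : forall x, 0 < x -> Q x = 0 -> Q' x < 0.

Lemma negative_stays_negative a b : 0 < a < b -> Q a < 0 -> Q b < 0.
Proof.
  intros Hab Ha. destruct (Rlt_le_dec (Q b) 0) as [|Hb]; auto. exfalso.
  (* the first zero m of Q after a is approached from below, yet Q' m < 0 *)
  destruct (first_zero (fun x => - Q x) a b) as [m [Hm [Hm0 Hbefore]]]; try lra.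
  { intros x Hx. apply continuity_pt_opp, derivable_continuous_pt.
    exists (Q' x). apply Q_deriv; lra. }
  assert (HQ'm : Q' m < 0) by (apply Q'_neg_at_zero; lra).
  destruct (deriv_neg_local Q m _ (Q_deriv m ltac:(lra)) HQ'm) as [d [Hd [Hleft _]]].
  set (y := Rmax a (m - d / 2)).
  assert (Hy : a <= y < m) by (unfold y; split; [apply Rmax_l | apply Rmax_lub_lt; lra]).
  assert (Q m < Q y).
  { apply Hleft. pose proof (Rmax_r a (m - d / 2)). unfold y in *; lra. }
  specialize (Hbefore y Hy). lra.
Qed.

Lemma nonpositive_stays_negative a b : 0 < a < b -> Q a <= 0 -> Q b < 0.
Proof.
  intros Hab [Ha|Ha]; [apply (negative_stays_negative a b); auto|].
  (* at a zero, Q becomes negative immediately to the right *)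
  assert (HQ'a : Q' a < 0) by (apply Q'_neg_at_zero; lra).
  destruct (deriv_neg_local Q a _ (Q_deriv a ltac:(lra)) HQ'a) as [d [Hd [_ Hright]]].
  set (a' := a + Rmin d (b - a) / 2).
  assert (Hmin : 0 < Rmin d (b - a)) by (apply Rmin_glb_lt; lra).
  pose proof (Rmin_l d (b - a)). pose proof (Rmin_r d (b - a)).
  apply (negative_stays_negative a' b); [unfold a'; lra|].
  rewrite <- Ha. apply Hright. unfold a'; lra.
Qed.

End DownwardCrossing.

(* An increasing function lying below L + k/x for all x > x0 never exceeds L:
   otherwise, at y = x + k/(f x - L), the bound would undercut f x. *)
Lemma increasing_below_hyperbola (f : R -> R) x0 L k : 0 <= x0 -> 0 < k ->
  (forall x y, x0 < x -> x < y -> f x <= f y) ->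
  (forall x, x0 < x -> f x < L + k / x) ->
  forall x, x0 < x -> f x <= L.
Proof.
  intros Hx0 Hk Hincr Hbound x Hx. apply Rnot_lt_le. intros HL.
  set (y := x + k / (f x - L)).
  assert (Hq : 0 < k / (f x - L)) by (apply Rdiv_lt_0_compat; lra).
  assert (Hxy : x < y) by (unfold y; lra).
  assert (Hfy := Hincr x y Hx Hxy). assert (Hby := Hbound y ltac:(lra)).
  assert (k / y < f x - L); [|lra].
  apply Rmult_lt_reg_r with y; [lra|].
  unfold Rdiv. rewrite Rmult_assoc, Rinv_l by lra.
  assert (k = (f x - L) * (y - x)) by (unfold y; field; lra).
  nra.
Qed.

(* A derivative bounded below by m/x forces logarithmic growth: f gains at
   least m*t between c and c*e^t, since f - m ln is nondecreasing. *)
Lemma log_growth (f f' : R -> R) c m : 0 < c ->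
  (forall x, c <= x -> derivable_pt_lim f x (f' x)) ->
  (forall x, c <= x -> m / x <= f' x) ->
  forall t, 0 <= t -> f c + m * t <= f (c * exp t).
Proof.
  intros Hc Hd Hlow t Ht.
  assert (Het : 1 <= exp t) by (pose proof (exp_ineq1_le t); lra).
  assert (Hmono := increasing_of_deriv (fun x => f x - m * ln x) (fun x => f' x - m * / x)
                     (fun x => c <= x)).
  assert (Hgain : f c - m * ln c <= f (c * exp t) - m * ln (c * exp t)).
  { apply Hmono; try nra.
    - intros x y w Hx _ Hw; lra.
    - intros x Hx. apply derivable_pt_lim_minus; [apply Hd; lra|].
      apply derivable_pt_lim_scal, derivable_pt_lim_ln; lra.
    - intros x Hx. specialize (Hlow x Hx). unfold Rdiv in Hlow. lra. }
  rewrite ln_mult, ln_exp in Hgain by (try apply exp_pos; lra). lra.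
Qed.

Definition riccati (b : R) (V : R -> R) (x : R) : R := / 2 + b * V x / x - 2 * V x ^ 2.

(* Positive solutions V of the Riccati equation on (0,+oo) with b > 0: V'' is
   negative at each zero of V' = riccati b V, and V' cannot stay positive
   forever; hence V' changes sign exactly once if it is positive somewhere. *)
Section Riccati.

Variables (b : R) (V : R -> R).
Hypothesis b_pos : 0 < b.
Hypothesis V_pos : forall x, 0 < x -> 0 < V x.
Hypothesis V_riccati : forall x, 0 < x -> derivable_pt_lim V x (riccati b V x).

Lemma riccati_deriv x : 0 < x ->
  derivable_pt_lim (riccati b V) x
    (b * (riccati b V x * x - V x) / x ^ 2 - 4 * V x * riccati b V x).
Proof.
  intros Hx. apply is_derive_Reals.
  assert (HV : is_derive V x (riccati b V x)) by (apply is_derive_Reals, V_riccati, Hx).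
  unfold riccati at 1. auto_derive.
  - repeat split; try lra; eexists; exact HV.
  - change (fun x => V x) with V. rewrite (is_derive_unique V x _ HV). field. lra.
Qed.

Lemma riccati_deriv_neg_at_zero x : 0 < x -> riccati b V x = 0 ->
  b * (riccati b V x * x - V x) / x ^ 2 - 4 * V x * riccati b V x < 0.
Proof.
  intros Hx Hzero. rewrite Hzero.
  assert (0 < b * V x / x ^ 2) by (apply Rdiv_lt_0_compat; [apply Rmult_lt_0_compat; auto | nra]).
  replace (b * (0 * x - V x) / x ^ 2 - 4 * V x * 0) with (- (b * V x / x ^ 2)) by (field; lra).
  lra.
Qed.

(* Otherwise V increases and, by the
   equation, V < 1/2 + b/(2x), so V <= 1/2; then V' >= b V / x >= m / x
   beyond c = x0 + 1, and V would grow logarithmically past 1/2. *)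
Lemma riccati_eventually_nonpos x0 : 0 < x0 -> exists x1, x0 < x1 /\ riccati b V x1 <= 0.
Proof.
  intros Hx0. apply NNPP. intros Hnone.
  assert (HQ : forall x, x0 < x -> 0 < riccati b V x).
  { intros x Hx. apply Rnot_le_lt. intros Hle. apply Hnone. eauto. }
  assert (Hincr : forall x y, x0 < x -> x < y -> V x <= V y).
  { intros x y Hx Hxy. left.
    apply (strictly_increasing_of_deriv V (riccati b V) (fun x => x0 < x)); auto; try lra.
    - intros u v w Hu _ Hw; lra.
    - intros u Hu. apply V_riccati; lra. }
  assert (Hhyper : forall x, x0 < x -> V x < / 2 + (b / 2) / x).
  { intros x Hx. specialize (HQ x Hx). unfold riccati in HQ.
    pose proof (V_pos x ltac:(lra)). apply Rnot_le_lt. intros Hv.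
    assert (Hbx : 0 < b / 2 / x) by (apply Rdiv_lt_0_compat; lra).
    replace (b * V x / x) with (2 * V x * (b / 2 / x)) in HQ by (field; lra).
    nra. }
  assert (Hhalf : forall x, x0 < x -> V x <= / 2)
    by (apply (increasing_below_hyperbola V x0 (/ 2) (b / 2)); auto; lra).
  set (c := x0 + 1). set (m := b * V c).
  assert (Hc : 0 < V c) by (apply V_pos; unfold c; lra).
  assert (Hm : 0 < m) by (unfold m; nra).
  assert (Hlow : forall x, c <= x -> m / x <= riccati b V x).
  { intros x Hx. unfold riccati, m.
    assert (V c <= V x) by (destruct Hx as [Hx|<-]; [apply Hincr; unfold c in *; lra | lra]).
    assert (V x <= / 2) by (apply Hhalf; unfold c in *; lra).
    assert (b * V c / x <= b * V x / x).
    { unfold Rdiv. apply Rmult_le_compat_r; [left; apply Rinv_0_lt_compat; unfold c in *; lra|].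
      apply Rmult_le_compat_l; lra. }
    nra. }
  assert (Hgrow := log_growth V (riccati b V) c m ltac:(unfold c; lra)
                     ltac:(intros x Hx; apply V_riccati; unfold c in *; lra) Hlow (/ m)
                     ltac:(left; apply Rinv_0_lt_compat, Hm)).
  assert (V (c * exp (/ m)) <= / 2).
  { apply Hhalf. assert (1 < exp (/ m)) by (pose proof (exp_ineq1 (/ m)); pose proof (Rinv_0_lt_compat m Hm); lra).
    unfold c in *; nra. }
  replace (m * / m) with 1 in Hgrow by (field; lra). lra.
Qed.

Lemma riccati_single_crossing x0 : 0 < x0 -> 0 < riccati b V x0 ->
  exists z, x0 < z /\ (forall y, 0 < y < z -> 0 < riccati b V y) /\
                      (forall y, z < y -> riccati b V y < 0).
Proof.
  intros Hx0 HQx0.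
  assert (Hcross := nonpositive_stays_negative (riccati b V) _ riccati_deriv riccati_deriv_neg_at_zero).
  destruct (riccati_eventually_nonpos x0 Hx0) as [x1 [Hx1 HQx1]].
  destruct (first_zero (riccati b V) x0 x1) as [z [Hz [HQz _]]]; auto.
  { intros x Hx. apply derivable_continuous_pt. eexists. apply riccati_deriv. lra. }
  exists z. split; [lra | split].
  - intros y Hy. apply Rnot_le_lt. intros Hle.
    assert (riccati b V z < 0) by (apply (Hcross y z); lra). lra.
  - intros y Hy. apply (Hcross z y); lra.
Qed.

End Riccati.

Lemma epsilon_infinite_sum (u : nat -> R) l : infinite_sum u l ->
  epsilon (inhabits 0) (fun l => infinite_sum u l) = l.
Proof.
  intros Hl. apply (uniqueness_sum u); auto.
  apply (epsilon_spec (inhabits 0) (fun l => infinite_sum u l)). eauto.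
Qed.

Lemma ex_pseries_entire (c : nat -> R) x : CV_radius c = p_infty -> ex_pseries c x.
Proof. intros Hc. apply CV_radius_inside. rewrite Hc. exact I. Qed.

Lemma PSeries_truncation_le (c : nat -> R) x n :
  (forall k, 0 <= c k) -> 0 <= x -> CV_radius c = p_infty ->
  sum_f_R0 (fun k => c k * x ^ k) n <= PSeries c x.
Proof.
  intros Hc Hx Hrad.
  assert (Hex : ex_series (fun k => c k * x ^ k)) by (apply ex_pseries_R, ex_pseries_entire, Hrad).
  unfold PSeries. rewrite (Series_incr_n _ (S n)) by (lia || exact Hex). simpl pred.
  assert (0 <= Series (fun k => c (S n + k)%nat * x ^ (S n + k))); [|lra].
  apply Series_nonneg.
  - intros k. apply Rmult_le_pos; [apply Hc | apply pow_le, Hx].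
  - exact (proj1 (@ex_series_incr_n R_AbsRing R_NormedModule _ (S n)) Hex).
Qed.

Lemma PSeries_truncation_error (c : nat -> R) x n :
  (forall k, 0 <= c k) -> CV_radius c = p_infty ->
  (forall k, (n < k)%nat -> c (S k) * Rabs x <= c k / 2) ->
  Rabs (PSeries c x - sum_f_R0 (fun k => c k * x ^ k) n) <= 2 * (c (S n) * Rabs x ^ S n).
Proof.
  intros Hc Hrad Hratio.
  set (u := fun k => c (S n + k)%nat * Rabs x ^ (S n + k)).
  assert (Hex : ex_series (fun k => c k * x ^ k)) by (apply ex_pseries_R, ex_pseries_entire, Hrad).
  assert (Hexu : ex_series u).
  { apply (proj1 (@ex_series_incr_n R_AbsRing R_NormedModule (fun k => c k * Rabs x ^ k) (S n))).
    apply ex_pseries_R, ex_pseries_entire, Hrad. }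
  unfold PSeries. rewrite (Series_incr_n _ (S n)) by (lia || exact Hex). simpl pred.
  replace (sum_f_R0 (fun k => c k * x ^ k) n + Series (fun k => c (S n + k)%nat * x ^ (S n + k))
           - sum_f_R0 (fun k => c k * x ^ k) n)
    with (Series (fun k => c (S n + k)%nat * x ^ (S n + k))) by ring.
  assert (Habs : forall k, Rabs (c (S n + k)%nat * x ^ (S n + k)) = u k).
  { intros k. unfold u. rewrite Rabs_mult, RPow_abs, (Rabs_pos_eq (c _)) by apply Hc. reflexivity. }
  eapply Rle_trans.
  { apply Series_Rabs. eapply ex_series_ext; [|exact Hexu]. intros k; rewrite Habs; reflexivity. }
  rewrite (Series_ext _ u) by exact Habs.
  replace (c (S n) * Rabs x ^ S n) with (u 0%nat) by (unfold u; rewrite Nat.add_0_r; reflexivity).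
  apply Series_halving_bound; auto.
  - intros k. unfold u. apply Rmult_le_pos; [apply Hc | apply pow_le, Rabs_pos].
  - intros k. unfold u. replace (S n + S k)%nat with (S (S n + k)) by lia.
    rewrite <- tech_pow_Rmult.
    assert (Hr := Hratio (S n + k)%nat ltac:(lia)).
    assert (0 <= Rabs x ^ (S n + k)) by apply pow_le, Rabs_pos.
    replace (c (S (S n + k)) * (Rabs x * Rabs x ^ (S n + k)))
      with ((c (S (S n + k)) * Rabs x) * Rabs x ^ (S n + k)) by ring.
    replace (c (S n + k)%nat * Rabs x ^ (S n + k) / 2)
      with ((c (S n + k)%nat / 2) * Rabs x ^ (S n + k)) by field.
    apply Rmult_le_compat_r; auto.
Qed.

Lemma poch_pos e n : 0 < e -> 0 < poch e n.
Proof.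
  intros He; induction n as [|n IH]; simpl; [lra|].
  apply Rmult_lt_0_compat; auto. pose proof (pos_INR n); lra.
Qed.

Lemma inv_INR_S_lim : is_lim_seq (fun n => / INR (S n)) 0.
Proof.
  replace (Finite 0) with (Rbar_inv p_infty) by reflexivity.
  apply is_lim_seq_inv; [|discriminate].
  apply (is_lim_seq_incr_1 INR p_infty), is_lim_seq_INR.
Qed.

Section BesselSeries.

Variable nu : R.
Hypothesis nu_gt : 0 < nu + 1.

Definition acoef (n : nat) : R := (/ 4) ^ n / (poch (nu + 1) n * INR (fact n)).

Lemma acoef_pos n : 0 < acoef n.
Proof.
  unfold acoef. apply Rdiv_lt_0_compat; [apply pow_lt; lra|].
  apply Rmult_lt_0_compat; [apply poch_pos, nu_gt | apply lt_0_INR, lt_O_fact].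
Qed.

Lemma acoef_0 : acoef 0 = 1.
Proof. unfold acoef; simpl; field. Qed.

Lemma acoef_S n : acoef (S n) = acoef n / (4 * (nu + 1 + INR n) * INR (S n)).
Proof.
  unfold acoef. simpl poch. change (fact (S n)) with (S n * fact n)%nat. rewrite mult_INR.
  pose proof (poch_pos _ n nu_gt). pose proof (pos_INR n).
  assert (0 < INR (fact n)) by apply lt_0_INR, lt_O_fact.
  rewrite S_INR. simpl pow. field. repeat split; lra.
Qed.

Lemma acoef_radius : CV_radius acoef = p_infty.
Proof.
  apply CV_radius_infinite_DAlembert.
  - intros n; pose proof (acoef_pos n); lra.
  - apply is_lim_seq_le_le with (u := fun _ => 0)
      (w := fun n => / (4 * (nu + 1)) * / INR (S n)).
    + intros n. rewrite acoef_S. pose proof (acoef_pos n). pose proof (pos_INR n).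
      rewrite S_INR.
      replace (acoef n / (4 * (nu + 1 + INR n) * (INR n + 1)) / acoef n)
        with (/ (4 * (nu + 1 + INR n) * (INR n + 1))) by (field; repeat split; lra).
      rewrite Rabs_pos_eq by (left; apply Rinv_0_lt_compat, Rmult_lt_0_compat; lra).
      split; [left; apply Rinv_0_lt_compat, Rmult_lt_0_compat; lra|].
      rewrite <- Rinv_mult. apply Rinv_le_contravar; [apply Rmult_lt_0_compat; lra|].
      apply Rmult_le_compat_r; lra.
    + apply is_lim_seq_const.
    + replace (Finite 0) with (Rbar_mult (/ (4 * (nu + 1))) 0) by (simpl; f_equal; ring).
      apply is_lim_seq_scal_l, inv_INR_S_lim.
Qed.

Lemma acoef'_radius : CV_radius (PS_derive acoef) = p_infty.
Proof. rewrite CV_radius_derive. exact acoef_radius. Qed.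

Lemma acoef''_radius : CV_radius (PS_derive (PS_derive acoef)) = p_infty.
Proof. rewrite CV_radius_derive. exact acoef'_radius. Qed.

Definition A (s : R) : R := PSeries acoef s.
Definition A1 (s : R) : R := PSeries (PS_derive acoef) s.
Definition A2 (s : R) : R := PSeries (PS_derive (PS_derive acoef)) s.

Lemma A_deriv s : is_derive A s (A1 s).
Proof. apply is_derive_PSeries. rewrite acoef_radius. exact I. Qed.

Lemma A1_deriv s : is_derive A1 s (A2 s).
Proof. apply is_derive_PSeries. rewrite acoef'_radius. exact I. Qed.

Lemma A_infinite_sum s : infinite_sum (fun n => acoef n * s ^ n) (A s).
Proof. apply is_series_Reals, Series_correct, ex_pseries_R, ex_pseries_entire, acoef_radius. Qed.

Lemma calI_eq x : calI nu x = A (x ^ 2).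
Proof.
  unfold calI. apply epsilon_infinite_sum. apply is_series_Reals.
  eapply is_series_ext; [|apply is_series_Reals, (A_infinite_sum (x ^ 2))].
  intros n. unfold Iterm, acoef. rewrite pow_mult. reflexivity.
Qed.

Lemma calJ_eq x : calJ nu x = A (- x ^ 2).
Proof.
  unfold calJ. apply epsilon_infinite_sum. apply is_series_Reals.
  eapply is_series_ext; [|apply is_series_Reals, (A_infinite_sum (- x ^ 2))].
  intros n. unfold Jterm, acoef. rewrite pow_mult.
  replace (- x ^ 2) with ((-1) * x ^ 2) by ring. replace (- / 4) with ((-1) * / 4) by ring.
  rewrite !Rpow_mult_distr. unfold Rdiv.
  match goal with |- ?l = ?r => change (@eq R l r) end. ring.
Qed.

(* The differential equation 4 s A'' + 4 (nu+1) A' - A = 0, which is the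
   coefficient recurrence 4 (n+1)(nu+1+n) a_(n+1) = a_n. *)
Lemma A_ode s : 4 * s * A2 s + 4 * (nu + 1) * A1 s - A s = 0.
Proof.
  set (d1 := PS_derive acoef). set (d2 := PS_derive d1).
  assert (E0 : ex_series (fun k => acoef k * s ^ k))
    by apply ex_pseries_R, ex_pseries_entire, acoef_radius.
  assert (E1 : ex_series (fun k => d1 k * s ^ k))
    by apply ex_pseries_R, ex_pseries_entire, acoef'_radius.
  assert (E2 : ex_series (fun k => PS_incr_1 d2 k * s ^ k))
    by apply ex_pseries_R, ex_pseries_incr_1, ex_pseries_entire, acoef''_radius.
  assert (Hscal : forall c u, ex_series u -> ex_series (fun k => c * u k))
    by (intros c u Hu; exact (@ex_series_scal_l R_AbsRing R_CompleteNormedModule c u Hu)).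
  unfold A2, A1, A. fold d1 d2.
  rewrite Rmult_assoc, <- (PSeries_incr_1 d2 s). unfold PSeries.
  transitivity (Series (fun k => 4 * (PS_incr_1 d2 k * s ^ k) +
     ((4 * (nu + 1)) * (d1 k * s ^ k) + (-1) * (acoef k * s ^ k)))).
  { rewrite Series_plus by (auto; apply (@ex_series_plus R_AbsRing R_CompleteNormedModule); auto).
    rewrite Series_plus by auto. rewrite !Series_scal_l. ring. }
  rewrite (Series_ext _ (fun k => 0 * 0)), Series_scal_l; [ring|].
  intros [|m]; simpl PS_incr_1; unfold d2, d1, PS_derive.
  - rewrite (acoef_S 0). change (zero : R) with 0. simpl INR.
    match goal with |- ?x = ?y => change (@eq R x y) end. field. lra.
  - rewrite (acoef_S (S m)). pose proof (pos_INR m). rewrite !S_INR.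
    match goal with |- ?x = ?y => change (@eq R x y) end. field. lra.
Qed.

Lemma acoef'_pos k : 0 <= PS_derive acoef k.
Proof. unfold PS_derive. apply Rmult_le_pos; [apply pos_INR | left; apply acoef_pos]. Qed.

(* Lower bounds from the leading coefficients a_0 = 1 and a_1 > 0. *)
Lemma A_ge_1 s : 0 <= s -> 1 <= A s.
Proof.
  intros Hs. rewrite <- acoef_0. replace (acoef 0) with (sum_f_R0 (fun k => acoef k * s ^ k) 0) by (simpl; ring).
  apply PSeries_truncation_le; auto using acoef_radius. intros k; left; apply acoef_pos.
Qed.

Lemma A1_pos s : 0 <= s -> 0 < A1 s.
Proof.
  intros Hs. apply Rlt_le_trans with (sum_f_R0 (fun k => PS_derive acoef k * s ^ k) 0).
  - simpl. unfold PS_derive. simpl INR. pose proof (acoef_pos 1). lra.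
  - apply PSeries_truncation_le; auto using acoef'_pos, acoef'_radius.
Qed.

(* Half the logarithmic derivative of calI nu. *)
Definition Vbessel (x : R) : R := x * (A1 (x ^ 2) / A (x ^ 2)).

(* V > 0 on (0,+oo) since A >= 1 and A' > 0 on [0,+oo). *)
Lemma Vbessel_pos x : 0 < x -> 0 < Vbessel x.
Proof.
  intros Hx. pose proof (A_ge_1 (x ^ 2) (pow2_ge_0 x)). pose proof (A1_pos (x ^ 2) (pow2_ge_0 x)).
  unfold Vbessel. apply Rmult_lt_0_compat; [lra | apply Rdiv_lt_0_compat; lra].
Qed.

Lemma ln_calI_deriv x : derivable_pt_lim (fun x => ln (calI nu x)) x (2 * Vbessel x).
Proof.
  apply is_derive_Reals.
  apply (is_derive_ext (fun x => ln (A (x ^ 2)))); [intros y; rewrite calI_eq; reflexivity|].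
  pose proof (A_ge_1 (x ^ 2) (pow2_ge_0 x)).
  auto_derive; replace (x * (x * 1)) with (x ^ 2) by ring; change (fun y : R => A y) with A.
  - repeat split; try lra. eexists; apply A_deriv.
  - rewrite (is_derive_unique _ _ _ (A_deriv _)). unfold Vbessel. field. lra.
Qed.

(* The Riccati equation for V, from the differential equation of A. *)
Lemma Vbessel_riccati x : 0 < x ->
  derivable_pt_lim Vbessel x (riccati (- (2 * nu + 1)) Vbessel x).
Proof.
  intros Hx. apply is_derive_Reals.
  pose proof (A_ge_1 (x ^ 2) (pow2_ge_0 x)). pose proof (A_ode (x ^ 2)) as Hode.
  unfold Vbessel at 1.
  auto_derive; replace (x * (x * 1)) with (x ^ 2) by ring;
    change (fun y : R => A y) with A; change (fun y : R => A1 y) with A1.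
  - repeat split; try lra; eexists; [apply A1_deriv | apply A_deriv].
  - rewrite (is_derive_unique _ _ _ (A_deriv _)), (is_derive_unique _ _ _ (A1_deriv _)).
    unfold riccati, Vbessel.
    set (a := A (x ^ 2)) in *. set (a1 := A1 (x ^ 2)) in *. set (a2 := A2 (x ^ 2)) in *.
    assert (Ha2 : a2 * (4 * x ^ 2) = a - 4 * (nu + 1) * a1) by lra.
    clearbody a a1 a2.
    match goal with |- ?l = ?r => change (@eq R l r) end.
    replace a2 with ((a - 4 * (nu + 1) * a1) / (4 * x ^ 2)) by (field_simplify_eq; lra).
    field. split; lra.
Qed.

Lemma calJ_continuous x : continuity_pt (calJ nu) x.
Proof.
  apply derivable_continuous_pt, ex_derive_Reals_0.
  apply (ex_derive_ext (fun y => A (- y ^ 2))); [intros y; rewrite calJ_eq; reflexivity|].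
  auto_derive. eexists; apply A_deriv.
Qed.

Lemma calJ_0 : calJ nu 0 = 1.
Proof. rewrite calJ_eq. replace (- 0 ^ 2) with 0 by ring. unfold A. rewrite PSeries_0. apply acoef_0. Qed.

End BesselSeries.

(* Explicit bounds on A, A' near s0 = 4 (nu+1)(nu+2) <= 3 from the first
   few coefficients, the remaining terms being controlled geometrically. *)
Section ExplicitBounds.

Variable nu : R.
Hypothesis nu_gt : 0 < nu + 1.

Lemma acoef_1 : acoef nu 1 = / (4 * (nu + 1)).
Proof. rewrite acoef_S, acoef_0 by exact nu_gt. simpl INR. field. lra. Qed.

Lemma acoef_2 : acoef nu 2 = / (32 * (nu + 1) * (nu + 2)).
Proof. rewrite acoef_S, acoef_1 by exact nu_gt. rewrite !S_INR. simpl INR. field. lra. Qed.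

Lemma acoef_3 : acoef nu 3 = / (384 * (nu + 1) * (nu + 2) * (nu + 3)).
Proof. rewrite acoef_S, acoef_2 by exact nu_gt. rewrite !S_INR. simpl INR. field. lra. Qed.

Lemma acoef_halving s k : 0 <= s <= 3 -> (1 <= k)%nat -> acoef nu (S k) * s <= acoef nu k / 2.
Proof.
  intros Hs Hk. rewrite acoef_S by exact nu_gt.
  assert (0 < acoef nu k) by (apply acoef_pos, nu_gt).
  assert (Hk1 : 1 <= INR k) by (apply (le_INR 1); lia). rewrite S_INR.
  set (D := 4 * (nu + 1 + INR k) * (INR k + 1)).
  assert (HD : 8 <= D) by (unfold D; nra).
  replace (acoef nu k / D * s) with (acoef nu k * (s / D)) by (field; lra).
  assert (s / D <= / 2); [|unfold Rdiv at 2; apply Rmult_le_compat_l; lra].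
  apply Rmult_le_reg_l with D; [lra|]. field_simplify; lra.
Qed.

Lemma acoef'_halving s k : 0 <= s <= 3 -> (1 <= k)%nat ->
  PS_derive (acoef nu) (S k) * s <= PS_derive (acoef nu) k / 2.
Proof.
  intros Hs Hk. unfold PS_derive. rewrite (acoef_S nu nu_gt (S k)).
  assert (0 < acoef nu (S k)) by (apply acoef_pos, nu_gt).
  assert (Hk1 : 1 <= INR k) by (apply (le_INR 1); lia). rewrite !S_INR.
  replace ((INR k + 1 + 1) * (acoef nu (S k) / (4 * (nu + 1 + (INR k + 1)) * (INR k + 1 + 1))) * s)
    with (acoef nu (S k) * (s / (4 * (nu + 1 + (INR k + 1))))) by (field; lra).
  replace ((INR k + 1) * acoef nu (S k) / 2) with (acoef nu (S k) * ((INR k + 1) / 2)) by field.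
  apply Rmult_le_compat_l; [lra|].
  apply Rmult_le_reg_l with (4 * (nu + 1 + (INR k + 1))); [lra|]. field_simplify; nra.
Qed.

Lemma A_lower s : 0 <= s ->
  1 + s / (4 * (nu + 1)) + s ^ 2 / (32 * (nu + 1) * (nu + 2)) <= A nu s.
Proof.
  intros Hs.
  assert (H := PSeries_truncation_le (acoef nu) s 2 (fun k => Rlt_le _ _ (acoef_pos nu nu_gt k)) Hs
                 (acoef_radius nu nu_gt)).
  simpl sum_f_R0 in H. rewrite acoef_0, acoef_1, acoef_2 in H. unfold A. simpl pow in *.
  unfold Rdiv. lra.
Qed.

Lemma A1_bounds s : 0 <= s <= 3 ->
  / (4 * (nu + 1)) + 2 * s / (32 * (nu + 1) * (nu + 2)) <= A1 nu s <=
  / (4 * (nu + 1)) + 2 * s / (32 * (nu + 1) * (nu + 2))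
    + 2 * (3 * s ^ 2 / (384 * (nu + 1) * (nu + 2) * (nu + 3))).
Proof.
  intros Hs.
  assert (Hlow := PSeries_truncation_le (PS_derive (acoef nu)) s 1 (acoef'_pos nu nu_gt)
                    (proj1 Hs) (acoef'_radius nu nu_gt)).
  assert (Hratio : forall k, (1 < k)%nat ->
            PS_derive (acoef nu) (S k) * Rabs s <= PS_derive (acoef nu) k / 2)
    by (intros k Hk; rewrite Rabs_pos_eq by lra; apply acoef'_halving; auto; lia).
  assert (Herr := PSeries_truncation_error (PS_derive (acoef nu)) s 1 (acoef'_pos nu nu_gt)
                    (acoef'_radius nu nu_gt) Hratio).
  rewrite (Rabs_pos_eq s) in Herr by lra.
  unfold A1. set (P := PSeries (PS_derive (acoef nu)) s) in *.
  pose proof (Rle_abs (P - sum_f_R0 (fun k => PS_derive (acoef nu) k * s ^ k) 1)).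
  simpl sum_f_R0 in *. unfold PS_derive in *. simpl INR in *.
  rewrite acoef_1, acoef_2, acoef_3 in *. simpl pow in *. unfold Rdiv. split; lra.
Qed.

Lemma A_neg_upper s : 0 <= s <= 3 ->
  A nu (- s) <= 1 - s / (4 * (nu + 1)) + s ^ 2 / (32 * (nu + 1) * (nu + 2))
    + 2 * (s ^ 3 / (384 * (nu + 1) * (nu + 2) * (nu + 3))).
Proof.
  intros Hs.
  assert (Hratio : forall k, (2 < k)%nat -> acoef nu (S k) * Rabs (- s) <= acoef nu k / 2)
    by (intros k Hk; rewrite Rabs_Ropp, Rabs_pos_eq by lra; apply acoef_halving; auto; lia).
  assert (Herr := PSeries_truncation_error (acoef nu) (- s) 2
                    (fun k => Rlt_le _ _ (acoef_pos nu nu_gt k)) (acoef_radius nu nu_gt) Hratio).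
  rewrite Rabs_Ropp, (Rabs_pos_eq s) in Herr by lra.
  unfold A. set (P := PSeries (acoef nu) (- s)) in *.
  pose proof (Rle_abs (P - sum_f_R0 (fun k => acoef nu k * (- s) ^ k) 2)).
  simpl sum_f_R0 in *. rewrite acoef_0, acoef_1, acoef_2, acoef_3 in *.
  simpl pow in *. unfold Rdiv. lra.
Qed.

End ExplicitBounds.

(* The test point x0 = sqrt (4 (nu+1)(nu+2)), for -1 < nu < -1/2: there the
   Bessel function J_nu is already negative while V is still increasing.
   Writing e = nu + 1 in (0,1/2), both facts reduce to polynomial
   inequalities in e. *)
Section TestPoint.

Variable nu : R.
Hypothesis nu_range : -1 < nu < - / 2.

Let s0 := 4 * (nu + 1) * (nu + 2).

(* The bound on A(-s0), written in e = nu + 1, is negative. *)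
Lemma poly_J e : 0 < e < / 2 ->
  - e + e * (1 + e) / 2 + e ^ 2 * (1 + e) ^ 2 / (3 * (2 + e)) < 0.
Proof.
  intros H. apply Rmult_lt_reg_r with (3 * (2 + e)); [lra|].
  field_simplify; [|lra]. assert (0 < e * e) by nra. nra.
Qed.

Lemma A_neg_at_s0 : A nu (- s0) < 0.
Proof.
  set (e := nu + 1). assert (He : 0 < e < / 2) by (unfold e; lra).
  assert (Hs : 0 <= s0 <= 3) by (unfold s0; split; nra).
  eapply Rle_lt_trans; [apply A_neg_upper; auto; lra|].
  unfold s0. replace nu with (e - 1) by (unfold e; ring).
  replace (1 - 4 * (e - 1 + 1) * (e - 1 + 2) / (4 * (e - 1 + 1))
           + (4 * (e - 1 + 1) * (e - 1 + 2)) ^ 2 / (32 * (e - 1 + 1) * (e - 1 + 2))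
           + 2 * ((4 * (e - 1 + 1) * (e - 1 + 2)) ^ 3
                  / (384 * (e - 1 + 1) * (e - 1 + 2) * (e - 1 + 3))))
    with (- e + e * (1 + e) / 2 + e ^ 2 * (1 + e) ^ 2 / (3 * (2 + e))) by (field; lra).
  apply poly_J, He.
Qed.

(* The polynomial inequality behind V'(x0) > 0: after clearing
   denominators it reads 12 + 4e - 21e^2 - ... - 3e^6 > 0 on (0,1/2). *)
Lemma poly_Q e : 0 < e < / 2 ->
  0 < (2 + e + e * (1 + e) / 2) ^ 2 / 2
      + (1 - 2 * e) * (2 + e + e * (1 + e) / 2) * ((1 + e) / (4 * e))
      - 2 * (4 * e * (1 + e)) * ((1 + e) / (4 * e) + e * (1 + e) / (4 * (e + 2))) ^ 2.
Proof.
  intros H.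
  replace ((2 + e + e * (1 + e) / 2) ^ 2 / 2
      + (1 - 2 * e) * (2 + e + e * (1 + e) / 2) * ((1 + e) / (4 * e))
      - 2 * (4 * e * (1 + e)) * ((1 + e) / (4 * e) + e * (1 + e) / (4 * (e + 2))) ^ 2)
    with ((12 + 4 * e - 21 * e ^ 2 - 34 * e ^ 3 - 26 * e ^ 4 - 12 * e ^ 5 - 3 * e ^ 6)
           / (8 * (e + 2) ^ 2)) by (field; lra).
  apply Rdiv_lt_0_compat; [|nra].
  assert (0 < e ^ 2) by nra. assert (e ^ 2 <= / 4) by nra.
  assert (e ^ 3 <= e ^ 2 / 2) by nra. assert (e ^ 4 <= e ^ 3 / 2) by nra.
  assert (e ^ 5 <= e ^ 4 / 2) by nra. assert (e ^ 6 <= e ^ 5 / 2) by nra.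
  assert (0 < e ^ 3) by nra. assert (0 < e ^ 4) by nra. assert (0 < e ^ 5) by nra.
  assert (0 < e ^ 6) by nra.
  lra.
Qed.

Lemma bounds_at_s0 : let e := nu + 1 in
  2 + e + e * (1 + e) / 2 <= A nu s0 /\
  (1 + e) / (4 * e) <= A1 nu s0 <= (1 + e) / (4 * e) + e * (1 + e) / (4 * (e + 2)).
Proof.
  intros e. assert (He : 0 < e < / 2) by (unfold e; lra).
  assert (Hs : 0 <= s0 <= 3) by (unfold s0; split; nra).
  pose proof (A_lower nu ltac:(lra) s0 (proj1 Hs)) as HA.
  pose proof (A1_bounds nu ltac:(lra) s0 Hs) as [HB1 HB2].
  assert (Hs0 : s0 = 4 * e * (1 + e)) by (unfold s0, e; ring).
  rewrite Hs0 in HA, HB1, HB2 |- *.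
  replace nu with (e - 1) in HA, HB1, HB2 |- * by (unfold e; ring).
  replace (e - 1 + 1) with e in HA, HB1, HB2 by ring.
  replace (e - 1 + 2) with (1 + e) in HA, HB1, HB2 by ring.
  replace (e - 1 + 3) with (e + 2) in HB2 by ring.
  replace (1 + 4 * e * (1 + e) / (4 * e) + (4 * e * (1 + e)) ^ 2 / (32 * e * (1 + e)))
    with (2 + e + e * (1 + e) / 2) in HA by (field; lra).
  replace (/ (4 * e) + 2 * (4 * e * (1 + e)) / (32 * e * (1 + e))) with ((1 + e) / (4 * e))
    in HB1, HB2 by (field; lra).
  replace (2 * (3 * (4 * e * (1 + e)) ^ 2 / (384 * e * (1 + e) * (e + 2))))
    with (e * (1 + e) / (4 * (e + 2))) in HB2 by (field; lra).
  repeat split; assumption.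
Qed.

(* With r = A'(s0)/A(s0) and b = -(2 nu + 1), V'(x0) = 1/2 + b r - 2 s0 r^2;
   after clearing the denominator A(s0)^2, the bounds above reduce its
   positivity to poly_Q. *)
Lemma riccati_pos_at_s0 :
  let r := A1 nu s0 / A nu s0 in 0 < / 2 + (- (2 * nu + 1)) * r - 2 * s0 * r ^ 2.
Proof.
  intros r. destruct bounds_at_s0 as [HA [HB1 HB2]].
  set (e := nu + 1) in *. assert (He : 0 < e < / 2) by (unfold e; lra).
  pose proof (poly_Q e He) as HP.
  unfold r. set (a := A nu s0) in *. set (a1 := A1 nu s0) in *.
  replace s0 with (4 * e * (1 + e)) by (unfold s0, e; ring).
  replace (- (2 * nu + 1)) with (1 - 2 * e) by (unfold e; ring).
  set (alo := 2 + e + e * (1 + e) / 2) in *.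
  set (p := (1 + e) / (4 * e)) in *.
  set (phi := p + e * (1 + e) / (4 * (e + 2))) in *.
  set (s := 4 * e * (1 + e)) in *.
  assert (0 < p) by (unfold p; apply Rdiv_lt_0_compat; lra).
  assert (0 < alo) by (unfold alo; nra).
  assert (0 < s) by (unfold s; nra).
  clearbody alo p phi s. assert (0 < a) by lra.
  replace (/ 2 + (1 - 2 * e) * (a1 / a) - 2 * s * (a1 / a) ^ 2)
    with ((a ^ 2 / 2 + (1 - 2 * e) * a * a1 - 2 * s * a1 ^ 2) / a ^ 2) by (field; lra).
  apply Rdiv_lt_0_compat; [|nra].
  assert (a ^ 2 >= alo ^ 2) by nra.
  assert (a * a1 >= alo * p) by nra.
  assert (a1 ^ 2 <= phi ^ 2) by nra.
  assert ((1 - 2 * e) * (a * a1) >= (1 - 2 * e) * (alo * p)) by nra.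
  assert (s * a1 ^ 2 <= s * phi ^ 2) by nra.
  nra.
Qed.

Lemma test_point : exists x0, 0 < x0 /\ calJ nu x0 < 0 /\
  0 < riccati (- (2 * nu + 1)) (Vbessel nu) x0.
Proof.
  assert (Hs0 : 0 < s0) by (unfold s0; nra).
  exists (sqrt s0).
  assert (Hx0 : 0 < sqrt s0) by (apply sqrt_lt_R0, Hs0).
  assert (Hsq : sqrt s0 ^ 2 = s0) by (apply pow2_sqrt; lra).
  split; [exact Hx0 | split].
  - rewrite calJ_eq, Hsq by lra. exact A_neg_at_s0.
  - assert (Hr := riccati_pos_at_s0). cbv zeta in Hr.
    assert (1 <= A nu s0) by (apply A_ge_1; lra).
    unfold riccati, Vbessel. rewrite Hsq. set (r := A1 nu s0 / A nu s0) in *.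
    replace (- (2 * nu + 1) * (sqrt s0 * r) / sqrt s0) with (- (2 * nu + 1) * r) by (field; lra).
    replace ((sqrt s0 * r) ^ 2) with (sqrt s0 ^ 2 * r ^ 2) by ring.
    rewrite Hsq. lra.
Qed.

End TestPoint.

(* Where V increases, ln (calI nu), whose derivative is 2 V, is strictly convex. *)
Lemma ln_calI_strictly_convex nu a c : 0 < nu + 1 -> 0 <= a ->
  (forall y, a < y < c -> 0 < riccati (- (2 * nu + 1)) (Vbessel nu) y) ->
  strictly_convex_on (fun x => ln (calI nu x)) a c.
Proof.
  intros Hnu Ha HV'. intros x y t Hx Hy Hne Ht.
  assert (Hint : is_interval (fun x => a < x < c)) by (intros u v w Hu Hv Hw; lra).
  apply (strictly_convex_of_deriv (fun x => ln (calI nu x)) (fun x => 2 * Vbessel nu x) _ Hint); auto.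
  - intros w _. apply ln_calI_deriv, Hnu.
  - intros u v Hu Hv Huv. assert (Vbessel nu u < Vbessel nu v); [|lra].
    apply (strictly_increasing_of_deriv _ (riccati (- (2 * nu + 1)) (Vbessel nu)) _ Hint); auto.
    intros w Hw. apply Vbessel_riccati; lra.
Qed.

Lemma ln_calI_strictly_concave nu z : 0 < nu + 1 -> 0 <= z ->
  (forall y, z < y -> riccati (- (2 * nu + 1)) (Vbessel nu) y < 0) ->
  strictly_concave_from (fun x => ln (calI nu x)) z.
Proof.
  intros Hnu Hz HV'. intros x y t Hx Hy Hne Ht. cbv beta.
  assert (Hint : is_interval (fun x => z < x)) by (intros u v w Hu Hv Hw; lra).
  apply (strictly_convex_of_deriv (fun x => - ln (calI nu x)) (fun x => - (2 * Vbessel nu x)) _ Hint);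
    auto.
  - intros w _. apply derivable_pt_lim_opp, ln_calI_deriv, Hnu.
  - intros u v Hu Hv Huv. assert (- Vbessel nu u < - Vbessel nu v); [|lra].
    apply (strictly_increasing_of_deriv (fun x => - Vbessel nu x)
             (fun x => - riccati (- (2 * nu + 1)) (Vbessel nu) x) _ Hint); auto.
    + intros w Hw. apply derivable_pt_lim_opp, Vbessel_riccati; lra.
    + intros w Hw. specialize (HV' w Hw). lra.
Qed.

Lemma not_log_convex_of_strictly_concave (f : R -> R) z :
  strictly_concave_from (fun x => ln (f x)) z -> ~ log_convex_on_R f.
Proof.
  intros Hconc Hconv.
  specialize (Hconv (z + 1) (z + 3) (1 / 2) ltac:(lra)).
  specialize (Hconc (z + 1) (z + 3) (1 / 2) ltac:(lra) ltac:(lra) ltac:(lra) ltac:(lra)).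
  cbv beta in Hconc. lra.
Qed.

(* J_nu, which equals 1 at 0, has a first positive zero before any point where it is negative. *)
Lemma calJ_first_zero nu x0 : 0 < nu + 1 -> 0 < x0 -> calJ nu x0 < 0 ->
  exists j, is_first_pos_zero_J nu j /\ j <= x0.
Proof.
  intros Hnu Hx0 HJ.
  destruct (first_zero (calJ nu) 0 x0) as [j [Hj [HJj Hbefore]]]; auto.
  - intros x _. apply calJ_continuous, Hnu.
  - rewrite calJ_0 by exact Hnu. lra.
  - lra.
  - exists j. split; [|lra]. split; [lra | split; auto].
    intros x Hx. specialize (Hbefore x ltac:(lra)). lra.
Qed.

(* V' changes sign once at some z > x0 >= j: ln calI nu is strictly convex
   on (0,z) and strictly concave on (z,+oo), hence not convex on R. *)
Theorem mainTheorem12 (nu : R) (hnu : -1 < nu < - / 2) :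
  (exists z : R,
      (exists j : R, is_first_pos_zero_J nu j /\ j <= z) /\
      strictly_convex_on (fun x => ln (calI nu x)) 0 z /\
      strictly_concave_from (fun x => ln (calI nu x)) z) /\
  ~ log_convex_on_R (calI nu).
Proof.
  assert (Hnu : 0 < nu + 1) by lra.
  assert (Hb : 0 < - (2 * nu + 1)) by lra.
  destruct (test_point nu hnu) as [x0 [Hx0 [HJ HV'x0]]].
  destruct (riccati_single_crossing _ _ Hb (Vbessel_pos nu Hnu) (Vbessel_riccati nu Hnu)
              x0 Hx0 HV'x0) as [z [Hz [Hincr Hdecr]]].
  destruct (calJ_first_zero nu x0 Hnu Hx0 HJ) as [j [Hj Hjx0]].
  assert (Hconc := ln_calI_strictly_concave nu z Hnu ltac:(lra) Hdecr).
  split.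
  - exists z. split; [exists j; split; [exact Hj | lra] | split; [|exact Hconc]].
    apply ln_calI_strictly_convex; auto; lra.
  - exact (not_log_convex_of_strictly_concave _ z Hconc).
Qed.
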